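(* Let $1\le k<n$, let $C$ be an $n\times n$ pairwise comparison matrix whose upper-left $k\times k$ submatrix $C_k$ is consistent (equivalently $\mathit{CI}(C_k)=0$ when $k\ge2$). Then the matrix $A_k=I_k-\frac{1}{n-1}(C_k-I_k)$ is invertible, so the arithmetic HRE system $A_k w=b$ with $b_i=\frac{1}{n-1}\sum_{j=k+1}^n c_{ij}w(a_j)$ ($i=1,\dots,k$) has a unique solution for any positive reference weights $w(a_{k+1}),\dots,w(a_n)$.
   Context: A pairwise comparison matrix is a square matrix with positive entries, $c_{ii}=1$ and $c_{ij}=1/c_{ji}$. It is consistent if $c_{ij}c_{jl}=c_{il}$ for all indices $i,j,l$. For a $k\times k$ pairwise comparison matrix $M$ ($k\ge 2$), $\mathit{CI}(M)=\frac{\rho(M)-k}{k-1}$ with $\rho$ the spectral radius. *)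

From HB Require Import structures.
From mathcomp Require Import all_boot all_order all_algebra.
Set Implicit Arguments. Unset Strict Implicit. Unset Printing Implicit Defensive.
Import Order.TTheory GRing.Theory Num.Theory.
Local Open Scope ring_scope.

Definition pcm (R : realFieldType) (n : nat) (C : 'M[R]_n) : Prop :=
  [/\ (forall i j, 0 < C i j), (forall i, C i i = 1) & (forall i j, C i j = (C j i)^-1)].

Definition consistent (R : realFieldType) (n : nat) (C : 'M[R]_n) : Prop :=
  forall i j l, C i j * C j l = C i l.

Definition HRE_A (R : realFieldType) (k m : nat) (C : 'M[R]_(k + m)) : 'M[R]_k :=
  1%:M - ((k + m).-1%:R)^-1 *: (ulsubmx C - 1%:M).

(* b_i = 1/(n-1) * sum_{j=k+1}^n c_ij w(a_j); reference weights indexed by 'I_m. *)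
Definition HRE_b (R : realFieldType) (k m : nat) (C : 'M[R]_(k + m))
    (wref : 'I_m -> R) : 'cV[R]_k :=
  \col_(i < k) (((k + m).-1%:R)^-1 * \sum_(j < m) C (lshift m i) (rshift k j) * wref j).

From HB Require Import structures.
From mathcomp Require Import all_boot all_order all_algebra.
From mathcomp Require Import ring.
Import Order.TTheory GRing.Theory Num.Theory.
Local Open Scope ring_scope.

(* A consistent matrix D of size k satisfies D^2 = k D, so A_k = (1 + c) I - c D
   (with c = 1/(n-1)) lies in the two-dimensional algebra spanned by I and D,
   where its inverse can be written down as a combination of I and D. *)

Lemma consistent_mulmx_self {R : realFieldType} {n : nat} {D : 'M[R]_n} :
  consistent D -> D *m D = n%:R *: D.
Proof.
move=> hD; apply/matrixP => i j; rewrite !mxE.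
under eq_bigr => l _ do rewrite hD.
by rewrite sumr_const card_ord mulr_natl.
Qed.

Lemma mulmx_scalar_sub_scale_inv {R : fieldType} {n : nat} {D : 'M[R]_n}
    {s a c : R} :
  D *m D = s *: D -> a != 0 -> a - c * s != 0 ->
  (a%:M - c *: D) *m (a^-1%:M + (c / (a * (a - c * s))) *: D) = 1%:M.
Proof.
move=> hD2 ha hacs.
rewrite mulmxDr !mulmxBl mul_scalar_mx mul_mx_scalar mul_scalar_mx.
rewrite -scalemxAr -scalemxAl hD2 !scalerA scale_scalar_mx divff //.
rewrite -scalerBl -addrA -scaleNr -scalerDl.
rewrite [X in X *: D](_ : _ = 0) ?scale0r ?addr0 //.
by field; apply/andP.
Qed.

Lemma scalar_sub_scale_unitmx {R : fieldType} {n : nat} {D : 'M[R]_n}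
    {s a c : R} :
  D *m D = s *: D -> a != 0 -> a - c * s != 0 -> a%:M - c *: D \in unitmx.
Proof.
by move=> hD2 ha hacs; case: (mulmx1_unit (mulmx_scalar_sub_scale_inv hD2 ha hacs)).
Qed.

Lemma HRE_AE (R : realFieldType) (k m : nat) (C : 'M[R]_(k + m)) :
  HRE_A C = (1 + ((k + m).-1%:R)^-1)%:M - ((k + m).-1%:R)^-1 *: ulsubmx C.
Proof.
apply/matrixP => i j; rewrite !mxE.
by case: (i == j); rewrite /= ?mulr1n ?mulr0n; ring.
Qed.

Lemma unitmx_solve_unique (R : comUnitRingType) (n : nat) (A : 'M[R]_n)
    (b : 'cV[R]_n) :
  A \in unitmx -> exists! x : 'cV[R]_n, A *m x = b.
Proof.
move=> hA; exists (invmx A *m b); split; first by rewrite mulKVmx.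
by move=> x <-; rewrite mulKmx.
Qed.

Theorem mainTheorem2 (R : realFieldType) (k m : nat) (C : 'M[R]_(k + m)) :
  (0 < k)%N -> (0 < m)%N ->
  pcm C -> consistent (ulsubmx C) ->
  HRE_A C \in unitmx /\
  (forall wref : 'I_m -> R, (forall j, 0 < wref j) ->
     exists! w : 'cV[R]_k, HRE_A C *m w = HRE_b C wref).
Proof.
move=> hk hm _ hcons.
set N : R := (k + m).-1%:R.
have hN1 : N + 1 = k%:R + m%:R by rewrite /N -natrD natr1 prednK // addn_gt0 hk.
have hNpos : 0 < N.
  by rewrite /N ltr0n -subn1 subn_gt0 -(prednK hk) -(prednK hm) addSn addnS.
have hmpos : 0 < (m%:R : R) by rewrite ltr0n.
have hU : HRE_A C \in unitmx.
  rewrite HRE_AE; apply: (scalar_sub_scale_unitmx (consistent_mulmx_self hcons)).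
    by rewrite -/N lt0r_neq0 // addr_gt0 // invr_gt0.
  rewrite -/N (_ : _ - _ = m%:R / N); first by rewrite mulf_neq0 ?invr_eq0 ?lt0r_neq0.
  have -> : (k%:R : R) = N + 1 - m%:R by rewrite hN1; ring.
  by field; rewrite lt0r_neq0.
by split=> // wref _; apply: unitmx_solve_unique.
Qed.
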